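(* Let $\mathcal{T}$ be an MPQ-tree of an interval graph $G=(V,E)$ and let $x\neq y$ be vertices with $node(x)=node(y)=P$, where $P$ is a P-node that is not a leaf of $\mathcal{T}$. Then $(x,y)$ is not an interval edge, i.e. $G-(x,y)$ is not an interval graph.
   Context: Graphs are finite and simple; for $G=(V,E)$ and $e\in E$, $G-e=(V,E\setminus\{e\})$. An edge $(x,y)\in E$ of an interval graph $G$ is an interval edge if $G-(x,y)$ is an interval graph. An MPQ-tree of an interval graph $G=(V,E)$, $V=\{1,\dots,n\}$, is a rooted plane tree whose nodes are P-nodes and Q-nodes. Each P-node carries a (possibly empty) set of vertices. A Q-node has $k\ge 3$ ordered positions $1,\dots,k$; position $i$ carries a set $S_i\subseteq V$ (the $i$-th section) and a child subtree $T_i$, which may be empty. Every vertex $v$ is assigned to exactly one node $node(v)$: either $v$ lies in the set of the P-node $node(v)$, or $node(v)$ is a Q-node and $v$ lies exactly in the sections $S_{l(v)},S_{l(v)+1},\dots,S_{r(v)}$ of it, with $l(v)<r(v)$. For a node with child subtrees $T_1,\dots,T_k$, $V_i$ denotes the set of vertices assigned to nodes of $T_i$ ($V_i=\emptyset$ if $T_i$ is empty). The maximal cliques of $G$ are in bijection with the descending paths from the root which at a P-node continue into one of its children (stopping if there is none) and at a Q-node choose a position $i$ and continue into $T_i$ (stopping if $T_i$ is empty); the clique is the union of the sets of the visited P-nodes and the chosen sections. Reading these cliques left to right gives a linear order of the maximal cliques, and the orders obtained this way after arbitrarily permuting children of P-nodes and reversing the positions of Q-nodes are exactly the orders of the maximal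 cliques of $G$ in which the cliques containing any fixed vertex are consecutive. Moreover, for every Q-node with sections $S_1,\dots,S_k$: (a) $V_1\neq\emptyset$ and $V_k\ne\emptyset$; (b) $S_1\subseteq S_2$ and $S_k\subseteq S_{k-1}$; (c) $S_{i-1}\cap S_i\neq\emptyset$ for $2\le i\le k$; (d) $S_{i-1}\neq S_i$ for $2\le i\le k$; (e) $(S_i\cap S_{i+1})\setminus S_1\neq\emptyset$ and $(S_{i-1}\cap S_i)\setminus S_k\neq\emptyset$ for $2\le i\le k-1$; (f) $(S_{i-1}\cup V_{i-1})\setminus S_i\neq\emptyset$ and $(S_i\cup V_i)\setminus S_{i-1}\neq\emptyset$ for $2\le i\le k$; and further (g) no empty P-node has an empty P-node as its parent, (h) no P-node has exactly one child whose root is a P-node, (i) every child subtree of a P-node is nonempty. *)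

From HB Require Import structures.
From Stdlib Require List Permutation.
From mathcomp Require Import all_boot.
Set Implicit Arguments. Unset Strict Implicit. Unset Printing Implicit Defensive.

Section MPQ.
Variable T : finType.

(* A simple graph on the finite vertex type T is a symmetric irreflexive
   relation e : rel T (the edge set). *)

Definition remove_edge (e : rel T) (x y : T) : rel T :=
  [rel u v | e u v && ~~ (((u == x) && (v == y)) || ((u == y) && (v == x)))].

(* interval graph: intersection graph of closed intervals [l v, r v];
   integer (nat) endpoints, which for finite graphs is equivalent to
   real endpoints. *)
Definition is_interval_graph (e : rel T) : Prop :=
  exists l r : T -> nat, (forall v, l v <= r v) /\
    forall u v, u != v -> (e u v <-> maxn (l u) (l v) <= minn (r u) (r v)).

Definition is_clique (e : rel T) (A : {set T}) : Prop :=
  {in A &, forall u v, u != v -> e u v}.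

Definition is_maxclique (e : rel T) (A : {set T}) : Prop :=
  is_clique e A /\ forall B, is_clique e B -> A \subset B -> B = A.

(* A P-node carries a set and a list of (nonempty) child subtrees;
   a Q-node carries the list of its positions: (section S_i, child T_i),
   where T_i = None means the empty subtree. *)
Inductive mpq : Type :=
| PNode of {set T} & seq mpq
| QNode of seq ({set T} * option mpq).

Fixpoint subtrees (t : mpq) : seq mpq :=
  t :: match t with
       | PNode _ cs => flatten (map subtrees cs)
       | QNode ss => flatten (map (fun p => match p with
                                            | (_, Some c) => subtrees c
                                            | (_, None) => [::] end) ss)
       end.

Definition sets_of (u : mpq) : seq {set T} :=
  match u with PNode A _ => [:: A] | QNode ss => map fst ss end.

Definition verts (t : mpq) : {set T} :=
  \bigcup_(u <- subtrees t) \bigcup_(A <- sets_of u) A.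

Definition overts (o : option mpq) : {set T} :=
  if o is Some c then verts c else set0.

(* maximal cliques read off the descending paths, left to right *)
Fixpoint cliques (t : mpq) : seq {set T} :=
  match t with
  | PNode A cs =>
      if cs is [::] then [:: A]
      else flatten (map (fun c => map (setU A) (cliques c)) cs)
  | QNode ss =>
      flatten (map (fun p => match p with
                             | (Si, None) => [:: Si]
                             | (Si, Some c) => map (setU Si) (cliques c) end) ss)
  end.

Inductive reorder : mpq -> mpq -> Prop :=
| reorderP S cs ds es : reorder_list cs ds -> Permutation.Permutation ds es ->
    reorder (PNode S cs) (PNode S es)
| reorderQ ss ss' : reorder_secs ss ss' -> reorder (QNode ss) (QNode ss')
| reorderQrev ss ss' : reorder_secs ss ss' -> reorder (QNode ss) (QNode (rev ss'))
with reorder_list : seq mpq -> seq mpq -> Prop :=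
| rl_nil : reorder_list [::] [::]
| rl_cons c d cs ds : reorder c d -> reorder_list cs ds ->
    reorder_list (c :: cs) (d :: ds)
with reorder_secs : seq ({set T} * option mpq) -> seq ({set T} * option mpq) -> Prop :=
| rs_nil : reorder_secs [::] [::]
| rs_none S ss ss' : reorder_secs ss ss' ->
    reorder_secs ((S, None) :: ss) ((S, None) :: ss')
| rs_some S c d ss ss' : reorder c d -> reorder_secs ss ss' ->
    reorder_secs ((S, Some c) :: ss) ((S, Some d) :: ss').

Definition consecutive (p : pred {set T}) (s : seq {set T}) : Prop :=
  forall i j k, i <= j -> j <= k -> k < size s ->
    p (nth set0 s i) -> p (nth set0 s k) -> p (nth set0 s j).

Definition consecutive_clique_order (e : rel T) (s : seq {set T}) : Prop :=
  uniq s /\ (forall A, A \in s <-> is_maxclique e A) /\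
  forall v, consecutive (fun A => v \in A) s.

(* local conditions at a Q-node with positions ss (0-based indices) *)
Definition Qnode_ok (ss : seq ({set T} * option mpq)) : Prop :=
  let k := size ss in
  let S i := nth set0 (map fst ss) i in
  let V i := overts (nth None (map snd ss) i) in
  [/\ 3 <= k,
      V 0 != set0 /\ V k.-1 != set0,
      S 0 \subset S 1 /\ S k.-1 \subset S k.-2,
      (forall i, 1 <= i < k -> S i.-1 :&: S i != set0) /\
      (forall i, 1 <= i < k -> S i.-1 != S i) /\
      (forall i, 1 <= i < k.-1 ->
                   (S i :&: S i.+1) :\: S 0 != set0 /\
                   (S i.-1 :&: S i) :\: S k.-1 != set0)
    & (forall i, 1 <= i < k ->
                   (S i.-1 :|: V i.-1) :\: S i != set0 /\
                   (S i :|: V i) :\: S i.-1 != set0)].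

Definition Qnode_vertex_ok (ss : seq ({set T} * option mpq)) (v : T) : Prop :=
  let S i := nth set0 (map fst ss) i in
  (exists i, i < size ss /\ v \in S i) ->
  exists l r, [/\ l < r, r < size ss &
                  forall i, i < size ss -> (v \in S i <-> l <= i <= r)].

Definition is_MPQ_tree (e : rel T) (t : mpq) : Prop :=
  [/\
      (forall v : T, count (fun u => has (fun A : {set T} => v \in A) (sets_of u)) (subtrees t) = 1) /\
      (forall ss v, List.In (QNode ss) (subtrees t) -> Qnode_vertex_ok ss v),
      uniq (cliques t) /\ (forall A, A \in cliques t <-> is_maxclique e A),
      (forall s, (exists t', reorder t t' /\ cliques t' = s) <->
                 consecutive_clique_order e s),
      (forall ss, List.In (QNode ss) (subtrees t) -> Qnode_ok ss) /\
      (forall S cs S' cs', List.In (PNode S cs) (subtrees t) -> S = set0 ->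
         List.In (PNode S' cs') cs -> S' != set0)
    &
      (forall S cs S' cs', List.In (PNode S cs) (subtrees t) ->
         cs <> [:: PNode S' cs'])].
(* (i) every child subtree of a P-node is nonempty: built into the type mpq *)

End MPQ.

(* Interval graphs have no induced 4-cycle: every 4-cycle of
   intervals has a chord.  If two distinct maximal cliques C1, C2 of a graph
   both contain x and y, pick a in C1 \ C2 and a vertex c of C2 not adjacent
   to a (it exists by maximality of C2); then x - a - y - c - x is an induced
   4-cycle of G - (x,y), so G - (x,y) is not an interval graph.

   The cliques read off a subtree occur, up to adding a common
   set Z, as a contiguous block of the cliques of the whole tree; since
   those are distinct maximal cliques, so are the Z :|: C for the cliques C
   of the subtree.  A non-leaf P-node has at least two cliques below it
   (two children, or by condition (h) one Q-child with at least three
   sections), and each of them contains the set of the P-node. *)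

From HB Require Import structures.
From mathcomp Require Import all_boot zify.
From Stdlib Require List.
Set Implicit Arguments. Unset Strict Implicit. Unset Printing Implicit Defensive.

Section IntervalGraphs.
Variable T : finType.
Implicit Types (f e : rel T) (C : {set T}).

Lemma interval_graph_C4_chord f a b c d :
  is_interval_graph f -> irreflexive f -> a != c -> b != d ->
  f a b -> f b c -> f c d -> f d a -> f a c || f b d.
Proof.
move=> [l [r [lr rep]]] irr nac nbd fab fbc fcd fda.
have meet u v : f u v -> maxn (l u) (l v) <= minn (r u) (r v).
  by move=> fuv; apply/(rep u v) => //; apply: contraTneq fuv => ->; rewrite irr.
have [//|nfac] := boolP (f a c).
have disj_ac : ~~ (maxn (l a) (l c) <= minn (r a) (r c)).
  by apply/negP => /(rep a c nac); apply/negP.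
apply/orP; right; apply/(rep b d nbd).
move: (meet _ _ fab) (meet _ _ fbc) (meet _ _ fcd) (meet _ _ fda) disj_ac (lr a) (lr c).
rewrite !geq_max !leq_min; lia.
Qed.

Lemma remove_edge_irreflexive e x y :
  irreflexive e -> irreflexive (remove_edge e x y).
Proof. by move=> irr u; rewrite /remove_edge /= irr. Qed.

Lemma remove_edge_removed e x y : ~~ remove_edge e x y x y.
Proof. by rewrite /remove_edge /= !eqxx andbF. Qed.

Lemma remove_edgeEl e x y u v :
  u != x -> u != y -> remove_edge e x y u v = e u v.
Proof. by move=> /negbTE ux /negbTE uy; rewrite /remove_edge /= ux uy andbT. Qed.

Lemma remove_edgeEr e x y u v :
  v != x -> v != y -> remove_edge e x y u v = e u v.
Proof. by move=> /negbTE vx /negbTE vy; rewrite /remove_edge /= vx vy !andbF andbT. Qed.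

Lemma maxclique_not_subset e C1 C2 :
  is_maxclique e C1 -> is_clique e C2 -> C1 != C2 -> exists2 a, a \in C1 & a \notin C2.
Proof.
move=> [_ maxC1] clC2 neq; have [sub|/subsetPn //] := boolP (C1 \subset C2).
by move: neq; rewrite (maxC1 _ clC2 sub) eqxx.
Qed.

Lemma maxclique_non_neighbour e C a :
  symmetric e -> is_maxclique e C -> a \notin C -> exists2 c, c \in C & ~~ e a c.
Proof.
move=> sym [clC maxC] aC.
have [/exists_inP [c cC nac]|/exists_inPn adj] := boolP [exists c in C, ~~ e a c].
  by exists c.
have cl_aC : is_clique e (a |: C).
  move=> u v; rewrite !in_setU1 => /predU1P [->|uC] /predU1P [->|vC] uv.
  - by rewrite eqxx in uv.
  - by have := adj v vC; rewrite negbK.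
  - by rewrite sym; have := adj u uC; rewrite negbK.
  - exact: clC.
by move: aC; rewrite -(maxC _ cl_aC (subsetUr _ _)) setU11.
Qed.

(* If x and y lie in two distinct maximal cliques, then G - (x,y) contains
   an induced 4-cycle, hence is not an interval graph. *)
Lemma two_maxcliques_not_interval e C1 C2 x y :
  symmetric e -> irreflexive e ->
  is_maxclique e C1 -> is_maxclique e C2 -> C1 != C2 ->
  x \in C1 -> y \in C1 -> x \in C2 -> y \in C2 -> x != y ->
  ~ is_interval_graph (remove_edge e x y).
Proof.
move=> sym irr max1 max2 neq x1 y1 x2 y2 nxy int.
have [a a1 a2] := maxclique_not_subset max1 max2.1 neq.
have [c c2 nac] := maxclique_non_neighbour sym max2 a2.
have not_in C u v : u \in C -> v \notin C -> v != u.
  by move=> uC; apply: contraNneq => ->.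
have c1 : c \notin C1.
  by move: nac; apply: contraNN => c1; apply: max1.1 => //; rewrite (not_in C2).
have adj1 u : u \in C1 -> u \in C2 -> e u a.
  by move=> u1 u2; apply: max1.1 => //; rewrite eq_sym (not_in C2).
have adj2 u : u \in C2 -> u \in C1 -> e u c.
  by move=> u2 u1; apply: max2.1 => //; rewrite eq_sym (not_in C1).
have nax := not_in _ _ _ x2 a2; have nay := not_in _ _ _ y2 a2.
have ncx := not_in _ _ _ x1 c1; have ncy := not_in _ _ _ y1 c1.
have exa : remove_edge e x y x a by rewrite remove_edgeEr // adj1.
have eay : remove_edge e x y a y by rewrite remove_edgeEl // sym adj1.
have eyc : remove_edge e x y y c by rewrite remove_edgeEr // adj2.
have ecx : remove_edge e x y c x by rewrite remove_edgeEl // sym adj2.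
have := interval_graph_C4_chord int (remove_edge_irreflexive x y irr)
  nxy (not_in _ _ _ c2 a2) exa eay eyc ecx.
by rewrite (negbTE (remove_edge_removed e x y)) remove_edgeEl // (negbTE nac).
Qed.
End IntervalGraphs.

(* List membership in a concatenation, for the Prop-valued List.In used by
   subtrees (MPQ-trees have no decidable equality). *)
Lemma In_flatten (A : Type) (a : A) (s : seq (seq A)) :
  List.In a (flatten s) <-> exists l, List.In l s /\ List.In a l.
Proof.
have -> : flatten s = List.concat s by elim: s => //= l s ->.
exact: List.in_concat.
Qed.

Lemma size_flatten_ge (A : Type) (s : seq (seq A)) :
  (forall l, List.In l s -> 0 < size l) -> size s <= size (flatten s).
Proof.
elim: s => //= l s IH ne; rewrite size_cat.
have := ne l (or_introl erefl); have := IH (fun l' h => ne l' (or_intror h)); lia.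
Qed.

Section MPQTrees.
Variable T : finType.
Implicit Types (t u c : mpq T) (cs : seq (mpq T)) (ss : seq ({set T} * option (mpq T))).

Section NestedInduction.
Variable P : mpq T -> Prop.
Hypothesis IHP : forall A cs, (forall c, List.In c cs -> P c) -> P (PNode A cs).
Hypothesis IHQ : forall ss, (forall S c, List.In (S, Some c) ss -> P c) -> P (QNode ss).

Fixpoint mpq_nested_ind t : P t :=
  match t with
  | PNode A cs =>
      let fix children l : List.Forall P l :=
        if l is c :: l' then List.Forall_cons c (mpq_nested_ind c) (children l')
        else List.Forall_nil P in
      @IHP A cs (proj1 (List.Forall_forall P cs) (children cs))
  | QNode ss =>
      let Pos (p : {set T} * option (mpq T)) := if p.2 is Some c then P c else True in
      let fix positions l : List.Forall Pos l :=
        match l with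
        | (Si, o) :: l' => List.Forall_cons (Si, o)
            (match o return Pos (Si, o) with
             | Some c => mpq_nested_ind c | None => I end)
            (positions l')
        | [::] => List.Forall_nil Pos
        end in
      @IHQ ss (fun S c => proj1 (List.Forall_forall Pos ss) (positions ss) (S, Some c))
  end.
End NestedInduction.

Definition position_subtrees (p : {set T} * option (mpq T)) : seq (mpq T) :=
  match p with (_, Some c) => subtrees c | (_, None) => [::] end.

Definition position_cliques (p : {set T} * option (mpq T)) : seq {set T} :=
  match p with (Si, None) => [:: Si] | (Si, Some c) => map (setU Si) (cliques c) end.

Lemma subtree_self t : List.In t (subtrees t).
Proof. by case: t => *; left. Qed.

Lemma subtree_Pchild A cs c u :
  List.In c cs -> List.In u (subtrees c) -> List.In u (subtrees (PNode A cs)).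
Proof.
move=> hc hu; right; apply/In_flatten; exists (subtrees c); split => //.
exact: List.in_map.
Qed.

Lemma subtree_Qchild ss S c u :
  List.In (S, Some c) ss -> List.In u (subtrees c) -> List.In u (subtrees (QNode ss)).
Proof.
move=> hc hu; right; apply/In_flatten; exists (subtrees c); split => //.
exact: (List.in_map position_subtrees _ _ hc).
Qed.

Lemma subtree_trans t u w :
  List.In u (subtrees t) -> List.In w (subtrees u) -> List.In w (subtrees t).
Proof.
elim/mpq_nested_ind: t => [A cs IH|ss IH] [<- //|].
- move=> /In_flatten [_ [/List.in_map_iff [c [<- hc]] hu]] hw.
  exact: subtree_Pchild hc (IH c hc hu hw).
- move=> /In_flatten [_ [/List.in_map_iff [[S [c|]] [<- hc]] //= hu]] hw.
  exact: subtree_Qchild hc (IH S c hc hu hw).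
Qed.

Lemma cliquesQ ss : cliques (QNode ss) = flatten (map position_cliques ss).
Proof. by []. Qed.

Lemma cliquesP A cs : cs <> [::] ->
  cliques (PNode A cs) = flatten (map (fun c => map (setU A) (cliques c)) cs).
Proof. by case: cs. Qed.

Lemma Pnode_clique_superset A cs C : C \in cliques (PNode A cs) -> A \subset C.
Proof.
case: cs => [|c cs]; first by rewrite inE => /eqP ->.
rewrite cliquesP //; elim: (c :: cs) => //= d ds IH.
by rewrite mem_cat => /orP [/mapP [D _ ->]|/IH //]; rewrite subsetUl.
Qed.

Lemma size_cliques_Qnode ss :
  (forall S c, List.In (S, Some c) ss -> 0 < size (cliques c)) ->
  size ss <= size (cliques (QNode ss)).
Proof.
move=> ne; rewrite cliquesQ -(size_map position_cliques); apply: size_flatten_ge.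
by move=> _ /List.in_map_iff [[S [c|]] [<- hc]] //=; rewrite size_map (ne S c).
Qed.

Definition no_empty_Qnode t :=
  forall ss, List.In (QNode ss) (subtrees t) -> 0 < size ss.

Lemma no_empty_Qnode_subtree t u :
  no_empty_Qnode t -> List.In u (subtrees t) -> no_empty_Qnode u.
Proof. by move=> ne hu ss hss; apply: ne (subtree_trans hu hss). Qed.

Lemma cliques_nonempty t : no_empty_Qnode t -> 0 < size (cliques t).
Proof.
elim/mpq_nested_ind: t => [A [|c cs] IH|ss IH] ne //.
- rewrite cliquesP //= size_cat size_map.
  have hc : List.In c (c :: cs) by left.
  have := IH c hc (no_empty_Qnode_subtree ne (subtree_Pchild A hc (subtree_self c))).
  lia.
- apply: leq_trans (ne ss (subtree_self _)) (size_cliques_Qnode _) => S c hc.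
  exact: IH hc (no_empty_Qnode_subtree ne (subtree_Qchild hc (subtree_self c))).
Qed.

Definition has_segment (s w : seq {set T}) : Prop :=
  exists Z pre post, s = pre ++ map (setU Z) w ++ post.

Lemma has_segment_refl s : has_segment s s.
Proof. by exists set0, [::], [::]; rewrite cats0 (eq_map (@set0U _)) map_id. Qed.

Lemma has_segment_flatten (X : Type) (F : X -> seq {set T}) l x Y s w :
  has_segment s w -> List.In x l -> F x = map (setU Y) s ->
  has_segment (flatten (map F l)) w.
Proof.
move=> [Z [pre [post ->]]] hx Fx; have [l1 [l2 ->]] := List.in_split _ _ hx.
exists (Y :|: Z), (flatten (map F l1) ++ map (setU Y) pre),
  (map (setU Y) post ++ flatten (map F l2)).
rewrite map_cat flatten_cat /= Fx !map_cat -!catA -map_comp.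
by congr (_ ++ (_ ++ (_ ++ _))); apply: eq_map => C /=; rewrite setUA.
Qed.

Lemma subtree_cliques_segment t u :
  List.In u (subtrees t) -> has_segment (cliques t) (cliques u).
Proof.
elim/mpq_nested_ind: t => [A cs IH|ss IH] [<-|]; try exact: has_segment_refl.
- move=> /In_flatten [_ [/List.in_map_iff [c [<- hc]] hu]].
  have ne : cs <> [::] by case: cs hc {IH}.
  by rewrite cliquesP //; apply: has_segment_flatten (IH c hc hu) hc _.
- move=> /In_flatten [_ [/List.in_map_iff [[S [c|]] [<- hc]] hu]]; last by [].
  by rewrite cliquesQ; apply: has_segment_flatten (IH S c hc hu) hc _.
Qed.
End MPQTrees.

Section MPQTreeCliques.
Variables (T : finType) (e : rel T) (t : mpq T).
Hypothesis tree : is_MPQ_tree e t.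

Lemma MPQ_no_empty_Qnode : no_empty_Qnode t.
Proof.
have [_ _ _ [Qok _] _] := tree.
by move=> ss /Qok [three _ _ _ _]; apply: leq_trans three.
Qed.

(* A non-leaf P-node yields at least two cliques: either it has two
   children, or by (h) its only child is a Q-node with at least three
   positions. *)
Lemma Pnode_two_cliques S cs : List.In (PNode S cs) (subtrees t) -> cs <> [::] ->
  1 < size (cliques (PNode S cs)).
Proof.
move=> hP ne; have [_ _ _ [Qok _] no_single_P] := tree.
have child c : List.In c cs -> List.In c (subtrees t).
  by move=> hc; apply: subtree_trans hP (subtree_Pchild S hc (subtree_self c)).
have nonempty u : List.In u (subtrees t) -> 0 < size (cliques u).
  by move=> hu; apply: cliques_nonempty (no_empty_Qnode_subtree MPQ_no_empty_Qnode hu).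
case: cs ne hP child => [//|c [|c' cs]] _ hP child.
- case: c hP child => [S' cs' hP|ss _ child]; first by case: (no_single_P _ _ S' cs' hP).
  have hQ := child _ (or_introl erefl).
  have [three _ _ _ _] := Qok ss hQ.
  have below Si c : List.In (Si, Some c) ss -> 0 < size (cliques c).
    by move=> hc; apply/nonempty/(subtree_trans hQ)/(subtree_Qchild hc)/subtree_self.
  have := size_cliques_Qnode below.
  rewrite /= cats0 size_map; lia.
- have := nonempty c (child c (or_introl erefl)).
  have := nonempty c' (child c' (or_intror (or_introl erefl))).
  rewrite /= !size_cat !size_map; lia.
Qed.

Lemma Pnode_two_maxcliques S cs : List.In (PNode S cs) (subtrees t) -> cs <> [::] ->
  exists C1 C2, [/\ is_maxclique e C1, is_maxclique e C2, C1 != C2,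
                    S \subset C1 & S \subset C2].
Proof.
move=> hP ne; have [_ [uniq_t max_t] _ _ _] := tree.
have [Z [pre [post Et]]] := subtree_cliques_segment hP.
have sup C : C \in cliques (PNode S cs) -> S \subset Z :|: C.
  by move=> hC; apply: subset_trans (Pnode_clique_superset hC) (subsetUr _ _).
have: uniq (map (setU Z) (cliques (PNode S cs))).
  by move: uniq_t; rewrite Et !cat_uniq => /and3P [_ _ /andP [-> _]].
have max C : C \in map (setU Z) (cliques (PNode S cs)) -> is_maxclique e C.
  by move=> hC; apply/max_t; rewrite Et !mem_cat hC orbT.
move: (Pnode_two_cliques hP ne) sup max.
case: (cliques (PNode S cs)) => [|C1 [|C2 l]] //= _ sup max /andP [n12 _].
exists (Z :|: C1), (Z :|: C2); split.
- by apply: max; rewrite mem_head.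
- by apply: max; rewrite inE mem_head orbT.
- by apply: contraNneq n12 => ->; rewrite mem_head.
- by apply: sup; rewrite mem_head.
- by apply: sup; rewrite inE mem_head orbT.
Qed.
End MPQTreeCliques.

Theorem mainTheorem2 (T : finType) (e : rel T) (t : mpq T)
  (S : {set T}) (cs : seq (mpq T)) (x y : T) :
  symmetric e -> irreflexive e -> is_interval_graph e -> is_MPQ_tree e t ->
  List.In (PNode S cs) (subtrees t) -> cs <> [::] ->
  x \in S -> y \in S -> x != y ->
  ~ is_interval_graph (remove_edge e x y).
Proof.
move=> sym irr _ tree hP ne xS yS nxy.
have [C1 [C2 [max1 max2 neq /subsetP sub1 /subsetP sub2]]] :=
  Pnode_two_maxcliques tree hP ne.
exact: (two_maxcliques_not_interval sym irr max1 max2 neq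
          (sub1 x xS) (sub1 y yS) (sub2 x xS) (sub2 y yS) nxy).
Qed.
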